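(* Let $n \ge 2$ and let $\tilde{\mathcal{C}} = [\tilde{\mathbf{x}}_1, \ldots, \tilde{\mathbf{x}}_n]^\top \in \mathbb{R}^{n \times 3}$ be a set of coordinates with adjacency (pairwise distance) matrix $\tilde{d}$, i.e. $\tilde{d}_{ij} = \|\tilde{\mathbf{x}}_i - \tilde{\mathbf{x}}_j\|$. Fix indices $u \neq v$ in $\{1,\ldots,n\}$ with $\tilde{\mathbf{x}}_u \neq \tilde{\mathbf{x}}_v$, let $\delta > 0$, and let $\hat{d} = \tilde{d} + \delta \bar{e}_{uv}$, where $\bar{e}_{uv}$ is the $n\times n$ matrix whose $(u,v)$ and $(v,u)$ entries equal $1$ and all other entries equal $0$. Consider the optimization problem $$f(\hat{d}) \triangleq \min_{\hat{\mathcal{C}} = [\hat{\mathbf{x}}_1, \ldots, \hat{\mathbf{x}}_n]} \sum_{i<j} \left( \|\hat{\mathbf{x}}_i - \hat{\mathbf{x}}_j\| - \hat{d}_{ij} \right)^2 .$$ Define the approximate solution $\hat{\mathcal{C}} = \tilde{\mathcal{C}} + \frac{\delta}{2(n-1)} \frac{\partial \tilde{d}_{uv}}{\partial \tilde{\mathcal{C}}}$, i.e. $\hat{\mathbf{x}}_u = \tilde{\mathbf{x}}_u + \frac{\delta}{2(n-1)}\boldsymbol{\lambda}_{uv}$, $\hat{\mathbf{x}}_v = \tilde{\mathbf{x}}_v - \frac{\delta}{2(n-1)}\boldsymbol{\lambda}_{uv}$, and $\hat{\mathbf{x}}_w = \tilde{\mathbf{x}}_w$ for $w \neq u,v$, where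 $\boldsymbol{\lambda}_{uv} = \frac{\tilde{\mathbf{x}}_u - \tilde{\mathbf{x}}_v}{\|\tilde{\mathbf{x}}_u - \tilde{\mathbf{x}}_v\|}$. Then the objective value at this approximate solution satisfies $$\sum_{i<j} \left( \|\hat{\mathbf{x}}_i - \hat{\mathbf{x}}_j\| - \hat{d}_{ij} \right)^2 \le \frac{2n^2 - 7n + 6}{2(n-1)^2}\,\delta^2,$$ and in particular $f(\hat{d}) \le \frac{2n^2 - 7n + 6}{2(n-1)^2}\,\delta^2$.
   Context: Norms $\|\cdot\|$ on vectors in $\mathbb{R}^3$ are Euclidean. $\frac{\partial \tilde{d}_{uv}}{\partial \tilde{\mathcal{C}}}$ denotes the $n\times 3$ matrix of partial derivatives of $\tilde{d}_{uv} = \|\tilde{\mathbf{x}}_u - \tilde{\mathbf{x}}_v\|$ with respect to the rows of $\tilde{\mathcal{C}}$: its row $u$ is $\boldsymbol{\lambda}_{uv}$, its row $v$ is $-\boldsymbol{\lambda}_{uv}$, and all other rows are zero. *)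

From HB Require Import structures.
From mathcomp Require Import all_boot all_order all_algebra.
From mathcomp Require Import reals classical_sets.
Set Implicit Arguments. Unset Strict Implicit. Unset Printing Implicit Defensive.
Import Order.TTheory GRing.Theory Num.Theory.
Local Open Scope ring_scope.
Local Open Scope classical_set_scope.

Section Defs.
Variable R : realType.

Definition enorm (x : 'rV[R]_3) : R := Num.sqrt (\sum_(k < 3) x 0 k ^+ 2).

Definition distmx n (C : 'M[R]_(n, 3)) : 'M[R]_n :=
  \matrix_(i, j) enorm (row i C - row j C).

Definition ebar n (u v : 'I_n) : 'M[R]_n :=
  \matrix_(i, j) (if ((i == u) && (j == v)) || ((i == v) && (j == u)) then 1 else 0).

Definition lambda_uv n (C : 'M[R]_(n, 3)) (u v : 'I_n) : 'rV[R]_3 :=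
  (enorm (row u C - row v C))^-1 *: (row u C - row v C).

(* d d_uv / d C : row u is lambda_uv, row v is -lambda_uv, other rows zero. *)
Definition ddist_dC n (C : 'M[R]_(n, 3)) (u v : 'I_n) : 'M[R]_(n, 3) :=
  \matrix_(w, k) (if w == u then lambda_uv C u v 0 k
                  else if w == v then - lambda_uv C u v 0 k else 0).

Definition stress n (C : 'M[R]_(n, 3)) (d : 'M[R]_n) : R :=
  \sum_(i < n) \sum_(j < n | (i < j)%N) (enorm (row i C - row j C) - d i j) ^+ 2.

Definition fopt n (d : 'M[R]_n) : R :=
  inf [set stress C d | C in [set: 'M[R]_(n, 3)]].

End Defs.

From HB Require Import structures.
From mathcomp Require Import all_boot all_order all_algebra.
From mathcomp Require Import reals classical_sets.
From mathcomp Require Import ring lra.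
Set Implicit Arguments. Unset Strict Implicit. Unset Printing Implicit Defensive.
Import Order.TTheory GRing.Theory Num.Theory.
Local Open Scope ring_scope.

(* Push x_u and x_v apart along lambda_uv by c = delta / (2(n-1)) each. The
   distance of the pair (u, v) then grows by exactly 2c, so that pair
   contributes (2c - delta)^2; by the triangle inequality each of the 2(n-2)
   pairs with exactly one endpoint in {u, v} changes length by at most c and
   contributes at most c^2; all other pairs are unchanged. The total
   (2c - delta)^2 + 2(n-2) c^2 is the stated bound, and f is an infimum of the
   objective, hence below its value at this configuration. *)

Section EuclideanNorm.
Variable R : realType.
Implicit Types (x y : 'rV[R]_3) (a : R).

Lemma enorm_ge0 x : 0 <= enorm x.
Proof. exact: sqrtr_ge0. Qed.

Lemma sum_ord3 (f : 'I_3 -> R) : \sum_(k < 3) f k = f 0 + f 1 + f 2%:R.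
Proof.
rewrite !big_ord_recl big_ord0 addr0 addrA.
by congr (f _ + f _ + f _); apply: val_inj.
Qed.

Lemma enorm_sqr x : enorm x ^+ 2 = x 0 0 ^+ 2 + x 0 1 ^+ 2 + x 0 2%:R ^+ 2.
Proof. by rewrite sqr_sqrtr ?sum_ord3 // !addr_ge0 ?sqr_ge0. Qed.

Lemma enorm_eq0 x : (enorm x == 0) = (x == 0).
Proof.
apply/idP/eqP => [|->]; last first.
  by rewrite /enorm big1 ?sqrtr0 // => k _; rewrite mxE expr0n.
rewrite sqrtr_eq0 => sum_le0.
have sum0 : \sum_(k < 3) x 0 k ^+ 2 = 0.
  by apply/le_anti; rewrite sum_le0 sumr_ge0 // => k _; apply: sqr_ge0.
apply/rowP => k; rewrite mxE; apply/eqP; rewrite -sqrf_eq0; apply/eqP.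
exact: (psumr_eq0P (fun k _ => sqr_ge0 (x 0 k)) sum0).
Qed.

Lemma enorm0 : enorm 0 = 0 :> R.
Proof. by apply/eqP; rewrite enorm_eq0. Qed.

Lemma enormZ a x : enorm (a *: x) = `|a| * enorm x.
Proof.
rewrite /enorm -sqrtr_sqr -sqrtrM ?sqr_ge0 // mulr_sumr.
by congr Num.sqrt; apply: eq_bigr => k _; rewrite mxE exprMn.
Qed.

Lemma enormN x : enorm (- x) = enorm x.
Proof. by rewrite -scaleN1r enormZ normrN normr1 mul1r. Qed.

Lemma enorm_normalize x : x != 0 -> enorm ((enorm x)^-1 *: x) = 1.
Proof.
rewrite -enorm_eq0 => nx0.
by rewrite enormZ ger0_norm ?invr_ge0 ?enorm_ge0 // mulVf.
Qed.

(* Lagrange's identity makes the defect of Cauchy-Schwarz a sum of squares. *)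
Lemma cauchy_schwarz3 x y :
  x 0 0 * y 0 0 + x 0 1 * y 0 1 + x 0 2%:R * y 0 2%:R <= enorm x * enorm y.
Proof.
have nxy0 : 0 <= enorm x * enorm y by rewrite mulr_ge0 ?enorm_ge0.
have := enorm_sqr x; have := enorm_sqr y.
set x0 := x 0 0; set x1 := x 0 1; set x2 := x 0 2%:R.
set y0 := y 0 0; set y1 := y 0 1; set y2 := y 0 2%:R.
move=> ny nx.
suff : (x0 * y0 + x1 * y1 + x2 * y2) ^+ 2 <= (enorm x * enorm y) ^+ 2 by nra.
rewrite exprMn nx ny -subr_ge0.
have -> : (x0 ^+ 2 + x1 ^+ 2 + x2 ^+ 2) * (y0 ^+ 2 + y1 ^+ 2 + y2 ^+ 2)
          - (x0 * y0 + x1 * y1 + x2 * y2) ^+ 2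
  = (x0 * y1 - x1 * y0) ^+ 2 + (x0 * y2 - x2 * y0) ^+ 2 + (x1 * y2 - x2 * y1) ^+ 2
  by ring.
by rewrite !addr_ge0 ?sqr_ge0.
Qed.

Lemma enormD_le x y : enorm (x + y) <= enorm x + enorm y.
Proof.
rewrite -ler_sqr ?nnegrE ?addr_ge0 ?enorm_ge0 //.
have cs := cauchy_schwarz3 x y.
rewrite sqrrD !enorm_sqr !mxE.
nra.
Qed.

Lemma enormD_sub_sqr x y : (enorm (x + y) - enorm x) ^+ 2 <= enorm y ^+ 2.
Proof.
have le_xy := enormD_le x y.
have := enormD_le (x + y) (- y); rewrite addrK enormN => le_x.
have := enorm_ge0 y; have := enorm_ge0 x; have := enorm_ge0 (x + y).
nra.
Qed.

End EuclideanNorm.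

Section LtPairSums.
Variable n : nat.

Lemma sum_lt_pairs_sym (V : nmodType) (F : 'I_n -> 'I_n -> V) :
  \sum_(i < n) \sum_(j < n | (i < j)%N) (F i j + F j i) =
  \sum_(i < n) \sum_(j < n | i != j) F i j.
Proof.
have swap : \sum_(i < n) \sum_(j < n | (i < j)%N) F j i =
            \sum_(i < n) \sum_(j < n | (j < i)%N) F i j.
  by rewrite (exchange_big_dep xpredT).
rewrite (eq_bigr _ (fun i _ => big_split _ _ _ _ _)) big_split /= swap -big_split /=.
apply: eq_bigr => i _; rewrite [RHS](bigID (fun j : 'I_n => (i < j)%N)) /=.
by congr (_ + _); apply: eq_bigl => j; rewrite -(inj_eq val_inj) /=; case: ltngtP.
Qed.

Variable R : pzSemiRingType.

Lemma sum_lt_pairs_incident (a : 'I_n) :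
  \sum_(i < n) \sum_(j < n | (i < j)%N) ((i == a)%:R + (j == a)%:R) = n.-1%:R :> R.
Proof.
rewrite (sum_lt_pairs_sym (fun i _ => (i == a)%:R)) (bigD1 a) //= eqxx.
rewrite [X in _ + X]big1 => [|i /negbTE ->]; last by rewrite big1.
rewrite addr0 sumr_const /= mulr1n -[n in n.-1](card_ord n) -(cardC1 a).
by congr _%:R; apply: eq_card => i; rewrite !inE eq_sym.
Qed.

Definition same_pair (i j u v : 'I_n) : bool :=
  ((i == u) && (j == v)) || ((i == v) && (j == u)).

Lemma sum_lt_pairs_same_pair (a b : 'I_n) : a != b ->
  \sum_(i < n) \sum_(j < n | (i < j)%N) (same_pair i j a b)%:R = 1 :> R.
Proof.
move=> ab.
have split_pair i j : (same_pair i j a b)%:R =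
    ((i == a) && (j == b))%:R + ((j == a) && (i == b))%:R :> R.
  rewrite /same_pair; have [-> | ia] := eqVneq i a.
    by rewrite (negbTE ab) andbF orbF addr0.
  have [_ | ib] := eqVneq i b; first by rewrite andbT add0r.
  by rewrite !andbF add0r.
rewrite (eq_bigr _ (fun i _ => eq_bigr _ (fun j _ => split_pair i j))).
rewrite (sum_lt_pairs_sym (fun i j => ((i == a) && (j == b))%:R)) (bigD1 a) //= eqxx.
rewrite [X in _ + X]big1 => [|i /negbTE ->]; last by rewrite big1.
rewrite addr0 (bigD1 b) //= eqxx [X in _ + X]big1 ?addr0 //.
by move=> j /andP[_ /negbTE ->].
Qed.

End LtPairSums.

Lemma ebarE (R : realType) n (u v i j : 'I_n) :
  ebar R u v i j = (same_pair i j u v)%:R.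
Proof. by rewrite mxE /same_pair; case: (_ || _). Qed.

Lemma row_ddist_dC (R : realType) n (C : 'M[R]_(n, 3)) (u v w : 'I_n) :
  row w (ddist_dC C u v) =
  if w == u then lambda_uv C u v else if w == v then - lambda_uv C u v else 0.
Proof.
by apply/rowP => k; rewrite !mxE; case: (w == u); case: (w == v); rewrite ?mxE.
Qed.

Section Perturbation.
Variables (R : realType) (n : nat) (C : 'M[R]_(n, 3)) (u v : 'I_n) (c delta : R).
Hypotheses (neq_uv : u != v) (neq_Cuv : row u C != row v C) (c_ge0 : 0 <= c).

Local Notation lam := (lambda_uv C u v).
Local Notation dC := (ddist_dC C u v).
Local Notation Chat := (C + c *: dC).
Local Notation dhat := (distmx C + delta *: ebar R u v).

Lemma enorm_lambda_uv : enorm lam = 1.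
Proof. by apply: enorm_normalize; rewrite subr_eq0. Qed.

Lemma row_perturbB (i j : 'I_n) :
  row i Chat - row j Chat = (row i C - row j C) + c *: (row i dC - row j dC).
Proof. by apply/rowP => k; rewrite !mxE; ring. Qed.

Lemma perturb_dist_uv :
  enorm (row u Chat - row v Chat) = enorm (row u C - row v C) + 2 * c.
Proof.
set x := row u C - row v C.
have nx0 : enorm x != 0 by rewrite enorm_eq0 subr_eq0.
rewrite row_perturbB !row_ddist_dC eqxx eq_sym (negbTE neq_uv) eqxx opprK.
have -> : x + c *: (lam + lam) = (1 + 2 * c / enorm x) *: x.
  by apply/rowP => k; rewrite /lambda_uv -/x !mxE; field.
rewrite enormZ ger0_norm; last by rewrite addr_ge0 ?divr_ge0 ?mulr_ge0 ?enorm_ge0.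
by rewrite mulrDl mul1r divfK.
Qed.

Lemma enorm_ddist_dC_rowB_sqr (i j : 'I_n) : i != j -> ~~ same_pair i j u v ->
  enorm (row i dC - row j dC) ^+ 2 =
  (i == u)%:R + (j == u)%:R + ((i == v)%:R + (j == v)%:R).
Proof.
rewrite /same_pair !row_ddist_dC.
have [-> | iu] := eqVneq i u.
  rewrite (negbTE neq_uv) /= orbF eq_sym => /negbTE -> /negbTE ->.
  by rewrite subr0 enorm_lambda_uv expr1n /=; ring.
have [-> | iv] := eqVneq i v.
  rewrite /= eq_sym => /negbTE -> /negbTE ->.
  by rewrite subr0 enormN enorm_lambda_uv expr1n /=; ring.
move=> _ _; have [-> | ju] := eqVneq j u.
  by rewrite (negbTE neq_uv) sub0r enormN enorm_lambda_uv expr1n /=; ring.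
have [_ | jv] := eqVneq j v.
  by rewrite sub0r opprK enorm_lambda_uv expr1n /=; ring.
by rewrite subr0 enorm0 expr0n /=; ring.
Qed.

Lemma stress_term_le (i j : 'I_n) : i != j ->
  (enorm (row i Chat - row j Chat) - dhat i j) ^+ 2 <=
  c ^+ 2 * ((i == u)%:R + (j == u)%:R + ((i == v)%:R + (j == v)%:R))
  + ((2 * c - delta) ^+ 2 - 2 * c ^+ 2) * (same_pair i j u v)%:R.
Proof.
have dhatE k l : dhat k l = enorm (row k C - row l C) + delta * (same_pair k l u v)%:R.
  by rewrite mxE [X in _ + X]mxE ebarE mxE.
move=> ij; rewrite dhatE; have [pair | not_pair] := boolP (same_pair i j u v).
  have opp_rowB (A : 'M[R]_(n, 3)) : row v A - row u A = - (row u A - row v A).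
    by rewrite opprB.
  case/orP: pair => /andP[/eqP-> /eqP->];
    rewrite ?opp_rowB ?enormN perturb_dist_uv !eqxx [v == u]eq_sym (negbTE neq_uv) /=; nra.
rewrite !mulr0 !addr0 row_perturbB.
apply: le_trans (enormD_sub_sqr _ _) _.
by rewrite enormZ exprMn ger0_norm // enorm_ddist_dC_rowB_sqr.
Qed.

Lemma stress_perturb_le :
  stress Chat dhat <= (2 * c - delta) ^+ 2 + 2 * (n.-1%:R - 1) * c ^+ 2.
Proof.
pose K := (2 * c - delta) ^+ 2 - 2 * c ^+ 2.
pose incident (w i j : 'I_n) : R := (i == w)%:R + (j == w)%:R.
apply: (@le_trans _ _ (\sum_(i < n) \sum_(j < n | (i < j)%N)
    (c ^+ 2 * (incident u i j + incident v i j) + K * (same_pair i j u v)%:R))).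
  apply: ler_sum => i _; apply: ler_sum => j ij; apply: stress_term_le.
  by apply: contraTneq ij => ->; rewrite ltnn.
have -> : \sum_(i < n) \sum_(j < n | (i < j)%N)
    (c ^+ 2 * (incident u i j + incident v i j) + K * (same_pair i j u v)%:R) =
  c ^+ 2 * (\sum_(i < n) \sum_(j < n | (i < j)%N) incident u i j
            + \sum_(i < n) \sum_(j < n | (i < j)%N) incident v i j)
  + K * \sum_(i < n) \sum_(j < n | (i < j)%N) (same_pair i j u v)%:R.
  rewrite mulrDr !mulr_sumr -!big_split /=; apply: eq_bigr => i _.
  by rewrite !mulr_sumr -!big_split /=; apply: eq_bigr => j _; rewrite mulrDr.
rewrite !sum_lt_pairs_incident sum_lt_pairs_same_pair // /K.
nra.
Qed.

End Perturbation.

Lemma fopt_le_stress (R : realType) n (C : 'M[R]_(n, 3)) (d : 'M[R]_n) :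
  fopt d <= stress C d.
Proof.
apply: ge_inf; last by exists C.
exists 0 => _ [C' _ <-].
by apply: sumr_ge0 => i _; apply: sumr_ge0 => j _; apply: sqr_ge0.
Qed.

Theorem theorem4p1 (R : realType) (n : nat) (C : 'M[R]_(n, 3)) (u v : 'I_n)
  (delta : R) :
  (2 <= n)%N -> u != v -> row u C != row v C -> 0 < delta ->
  let dhat := distmx C + delta *: ebar R u v in
  let Chat := C + (delta / (2 * (n%:R - 1))) *: ddist_dC C u v in
  let bound := (2 * n%:R ^+ 2 - 7 * n%:R + 6) / (2 * (n%:R - 1) ^+ 2) * delta ^+ 2 in
  stress Chat dhat <= bound /\ fopt dhat <= bound.
Proof.
move=> n_ge2 neq_uv neq_Cuv delta_gt0 dhat Chat bound.
have n1_gt0 : 0 < n%:R - 1 :> R by rewrite subr_gt0 ltr1n.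
have c_ge0 : 0 <= delta / (2 * (n%:R - 1)) by rewrite divr_ge0 ?mulr_ge0 ?ltW.
have stress_le : stress Chat dhat <= bound.
  apply: le_trans (stress_perturb_le delta neq_uv neq_Cuv c_ge0) _.
  rewrite -subn1 natrB ?(ltnW n_ge2) // le_eqVlt; apply/orP; left; apply/eqP.
  by rewrite /bound; field; rewrite gt_eqF.
by split=> //; apply: le_trans (fopt_le_stress _ _) stress_le.
Qed.
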